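(* Let $t\in\mathbb{R}$ and $m\in\mathbb{N}$. Define polynomials $B_n(t,m;x)$ by $$\sum_{n=0}^\infty B_n(t,m;x)\frac{z^n}{n!}=\left(\frac{z^m/m!}{e^z-\sum_{k=0}^{m-1}z^k/k!}\right)^te^{xz}$$ for $z$ in a neighborhood of $0$. Then for every $n\in\mathbb{N}_0$, $$B_n(t,m;0)=\sum_{k=0}^n\binom{-t}{k}\binom{n+t}{n-k}C(m,n,k),\qquad C(m,n,k)=n!\,(m!)^k\sum_{j_1+\cdots+j_k=n}\frac{1}{(m+j_1)!\cdots(m+j_k)!},$$ where the sum runs over $(j_1,\ldots,j_k)\in\mathbb{N}_0^k$ (for $k=0$, $C(m,n,0)=\delta_{n0}$). *)

From Stdlib Require Import Reals List Arith.
Import ListNotations.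
Open Scope R_scope.

Fixpoint sumR (n : nat) (f : nat -> R) : R :=
  match n with
  | O => 0
  | S n' => sumR n' f + f n'
  end.

Fixpoint prodR (n : nat) (f : nat -> R) : R :=
  match n with
  | O => 1
  | S n' => prodR n' f * f n'
  end.

Definition gbinom (a : R) (k : nat) : R :=
  prodR k (fun i => a - INR i) / INR (fact k).

(* The base function  (z^m/m!) / (e^z - sum_{k<m} z^k/k!),
   extended at z = 0 by its limit value 1 (removable singularity). *)
Definition Gbase (m : nat) (z : R) : R :=
  if Req_EM_T z 0 then 1
  else (z ^ m / INR (fact m)) / (exp z - sumR m (fun k => z ^ k / INR (fact k))).

Fixpoint tuples (k N : nat) : list (list nat) :=
  match k with
  | O => [ [] ]
  | S k' => flat_map (fun j => map (cons j) (tuples k' N)) (seq 0 (N + 1))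
  end.

Definition list_sumn (l : list nat) : nat := fold_right Nat.add 0%nat l.

Definition Ccoef (m n k : nat) : R :=
  INR (fact n) * (INR (fact m)) ^ k *
  fold_right Rplus 0
    (map (fun js => / fold_right Rmult 1 (map (fun j => INR (fact (m + j))) js))
         (filter (fun js => Nat.eqb (list_sumn js) n) (tuples k n))).

Definition egf_near0 (b : nat -> R) (F : R -> R) : Prop :=
  exists delta : R, delta > 0 /\
    forall z : R, Rabs z < delta ->
      infinite_sum (fun n => b n * z ^ n / INR (fact n)) (F z).

From Stdlib Require Import Reals Lra Lia List Arith.
From Coquelicot Require Import Coquelicot.
From HB Require Import structures.
From mathcomp Require all_boot all_algebra Rstruct ring.
Open Scope R_scope.

(* The generating function at x = 0 is h(z)^(-t), where h is the power series with
   coefficients [hcoef m] below, h(0) = 1.  For a power series h with h(0) = 1 and a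
   real s, the coefficients a_n(s) of h^s are determined by the coefficientwise form of
   h u' = s h' u, i.e. by J. C. P. Miller's recurrence
     (n+1) a_(n+1) = sum_(i<=n) h_(i+1) ((i+1) s - (n-i)) a_(n-i).
   The recurrence shows that a_n(s) is a polynomial in s of degree at most n, bounded by
   (2|s|+2)^n, and equal at s = k in N to the n-th coefficient of h^k, which is C(m,n,k)/n!
   for our h.  Interpolating a_n at s = 0, ..., n in the basis binom(s,k) binom(n-s,n-k) gives
   the formula (with s = -t).  Analytically, sum_n a_n(s) z^n has a positive radius and
   u h^(-s) has zero derivative, so it equals h^s near 0, and power series coefficients are
   unique. *)

(* e^z - sum_(k<m) z^k/k! = (z^m/m!) sum_j hcoef m j z^j, so [Gbase m] is the reciprocal of
   the power series with coefficients [hcoef m]. *)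
Definition hcoef (m j : nat) : R := INR (fact m) / INR (fact (m + j)).

Fixpoint pow_coef (h : nat -> R) (k n : nat) : R :=
  match k with
  | O => if Nat.eqb n 0 then 1 else 0
  | S k => sumR (S n) (fun j => h j * pow_coef h k (n - j))
  end.

(* Coefficientwise form of h u' = s h' u, the differential equation of u = h^s. *)
Definition power_ode (h : nat -> R) (s : R) (u : nat -> R) : Prop :=
  forall n, PS_mult h (PS_derive u) n = s * PS_mult (PS_derive h) u n.

Definition miller_sum (h : nat -> R) (s : R) (u : nat -> R) (n : nat) : R :=
  sumR (S n) (fun i => h (S i) * (INR (S i) * s - INR (n - i)) * u (n - i)%nat).

Definition miller_rec (h : nat -> R) (s : R) (u : nat -> R) : Prop :=
  forall n, INR (S n) * u (S n) = miller_sum h s u n.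

(** * Real powers of power series *)

Module MillerRecurrence.
Import all_boot all_algebra Rstruct ring.
Import GRing.Theory Num.Theory.

Section BinomialInterpolation.
Variable F : numFieldType.
Local Open Scope ring_scope.

Definition falling_poly k : {poly F} := \prod_(j < k) ('X - j%:R%:P).

(* binom(X,k) binom(n-X,n-k): the Lagrange basis for the nodes 0, ..., n. *)
Definition binom_basis n k : {poly F} :=
  (k`! * (n - k)`!)%:R^-1 *: (falling_poly k * (falling_poly (n - k) \Po (n%:R%:P - 'X))).

Lemma horner_falling_poly k x : (falling_poly k).[x] = \prod_(j < k) (x - j%:R).
Proof. by rewrite horner_prod; apply: eq_bigr => j _; rewrite hornerXsubC. Qed.

Lemma size_falling_poly k : size (falling_poly k) = k.+1.
Proof. by rewrite size_prod_XsubC /index_enum unlock -enumT size_enum_ord. Qed.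

Lemma falling_poly_nat k i : (falling_poly k).[i%:R] = (i ^_ k)%:R.
Proof.
elim: k => [|k IH]; first by rewrite /falling_poly big_ord0 hornerC.
rewrite /falling_poly big_ord_recr hornerM -/(falling_poly k) IH hornerXsubC ffactnSr.
have [ki | ik] := leqP k i; first by rewrite natrM natrB.
by rewrite ffact_small // !mul0n mul0r.
Qed.

Lemma binom_basis_nat n k i : (i <= n)%N -> (binom_basis n k).[i%:R] = (i == k)%:R.
Proof.
move=> le_in; rewrite hornerZ hornerM horner_comp hornerD hornerN hornerC hornerX.
rewrite -natrB // !falling_poly_nat -natrM.
have [-> | ne_ik] := eqVneq i k.
  by rewrite !ffactnn mulVf // pnatr_eq0 -lt0n muln_gt0 !fact_gt0.
suff -> : (i ^_ k * (n - i) ^_ (n - k))%N = 0%N by rewrite mulr0.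
have [ik | ki] : (i < k \/ k < i)%N by case: ltngtP ne_ik; auto.
  by rewrite ffact_small.
by rewrite [X in (_ * X)%N]ffact_small ?muln0 // ltn_sub2l // (leq_trans ki).
Qed.

Lemma size_binom_basis n k : (k <= n)%N -> (size (binom_basis n k) <= n.+1)%N.
Proof.
move=> le_kn; apply: leq_trans (size_scale_leq _ _) _.
apply: leq_trans (size_polyMleq _ _) _; rewrite size_falling_poly addSn /=.
have size_reflect : size (n%:R%:P - 'X : {poly F}) = 2%N.
  by rewrite -opprB size_polyN size_XsubC.
apply: leq_trans (leq_add (leqnn _) (size_comp_poly_leq _ _)) _.
by rewrite size_falling_poly size_reflect muln1 addnS subnKC.
Qed.

Theorem binomial_interpolation (p : {poly F}) n : (size p <= n.+1)%N ->
  p = \sum_(k < n.+1) p.[k%:R] *: binom_basis n k.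
Proof.
move=> size_p; apply/eqP; rewrite -subr_eq0; apply/eqP.
apply: (@roots_geq_poly_eq0 _ _ [seq i%:R | i <- iota 0 n.+1]).
- apply/allP => x /mapP [i]; rewrite mem_iota add0n => /andP [_ le_in] ->.
  rewrite /root hornerD hornerN horner_sum (bigD1 (Ordinal le_in)) //= big1.
    by rewrite hornerZ binom_basis_nat // eqxx mulr1 addr0 subrr.
  move=> k; rewrite -val_eqE eq_sym => /negPf ne_ik.
  by rewrite hornerZ binom_basis_nat // ne_ik mulr0.
- by rewrite map_inj_uniq ?iota_uniq // => i j /eqP; rewrite eqr_nat => /eqP.
rewrite size_map size_iota; apply: leq_trans (size_polyD _ _) _.
rewrite size_polyN geq_max size_p; apply: leq_trans (size_sum _ _ _) _.
apply/bigmax_leqP => k _; apply: leq_trans (size_scale_leq _ _) _.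
exact/size_binom_basis/ltnSE/ltn_ord.
Qed.

End BinomialInterpolation.

Arguments falling_poly {F}.
Arguments binom_basis {F}.
Arguments binomial_interpolation {F p n}.

Local Open Scope ring_scope.

Lemma sumRE (f : nat -> R) n : sumR n f = \sum_(i < n) f i.
Proof. by elim: n => [|n IH]; rewrite ?big_ord0 // big_ord_recr /= IH. Qed.

Lemma prodRE (f : nat -> R) n : prodR n f = \prod_(i < n) f i.
Proof. by elim: n => [|n IH]; rewrite ?big_ord0 // big_ord_recr /= IH. Qed.

Lemma PS_multE (a b : nat -> R) n : PS_mult a b n = \sum_(i < n.+1) a i * b (n - i)%N.
Proof. by rewrite /PS_mult sum_f_R0E big_mkord. Qed.

Lemma PS_deriveE (a : nat -> R) n : PS_derive a n = n.+1%:R * a n.+1.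
Proof. by rewrite /PS_derive INRE. Qed.

Lemma miller_sumE h s u n : miller_sum h s u n
  = \sum_(i < n.+1) h i.+1 * (i.+1%:R * s - (n - i)%:R) * u (n - i)%N.
Proof. by rewrite /miller_sum sumRE; apply: eq_bigr => i _; rewrite !INRE. Qed.

Section PowerCoefficients.
Variable h : nat -> R.

Lemma pow_coefS k n : pow_coef h k.+1 n = \sum_(j < n.+1) h j * pow_coef h k (n - j).
Proof. exact: sumRE. Qed.

Lemma coef_trunc_exp N k j : (j < N)%N -> ((\poly_(i < N) h i) ^+ k)`_j = pow_coef h k j.
Proof.
elim: k j => [|k IH] j lt_jN; first by rewrite expr0 coef1; case: j lt_jN.
rewrite exprS coefM pow_coefS; apply: eq_bigr => i _.
have lt_iN : (i < N)%N := leq_ltn_trans (leq_ord i) lt_jN.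
by rewrite coef_poly lt_iN IH // (leq_ltn_trans (leq_subr _ _) lt_jN).
Qed.

Lemma pow_coef_ode k : power_ode h (INR k) (pow_coef h k).
Proof.
move=> n; set H := \poly_(i < n.+2) h i.
have ode_H : H * (H ^+ k)^`() = (H^`() * H ^+ k) *+ k.
  case: k => [|k]; first by rewrite expr0 mulr0n -polyC1 derivC mulr0.
  by rewrite deriv_exp /= mulrnAr mulrCA -exprS.
have lt_n : forall i : 'I_n.+1, (n - i < n.+2)%N.
  by move=> i; rewrite ltnS (leq_trans (leq_subr _ _)).
rewrite !PS_multE INRE RmultE mulr_natl.
transitivity (\sum_(i < n.+1) H`_i * (H ^+ k)^`()`_(n - i)).
  apply: eq_bigr => i _; have lt_i : (i < n.+2)%N := leq_trans (ltn_ord i) (leqnSn _).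
  rewrite coef_poly lt_i coef_deriv coef_trunc_exp; last by rewrite !ltnS leq_subr.
  by rewrite /PS_derive INRE RmultE mulr_natl.
rewrite -coefM ode_H coefMn coefM; congr (_ *+ _); apply: eq_bigr => i _.
rewrite coef_deriv coef_poly ltnS ltn_ord coef_trunc_exp ?lt_n //.
by rewrite /PS_derive INRE RmultE mulr_natl.
Qed.

Hypothesis h0 : h 0%N = 1.

Lemma pow_coef_0 k : pow_coef h k 0 = 1.
Proof. by elim: k => [|k IH] //; rewrite pow_coefS big_ord1 h0 IH mulr1. Qed.

Lemma power_ode_miller s u : power_ode h s u <-> miller_rec h s u.
Proof.
suff eq_n n : PS_mult h (PS_derive u) n - s * PS_mult (PS_derive h) u n
    = INR n.+1 * u n.+1 - miller_sum h s u n.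
  split=> E n; have := eq_n n.
    by rewrite E subrr => /esym/eqP; rewrite subr_eq0 => /eqP.
  by move: (E n); rewrite RmultE => ->; rewrite subrr => /eqP; rewrite subr_eq0 => /eqP.
rewrite !PS_multE big_ord_recl !PS_deriveE h0 mul1r subn0 miller_sumE INRE.
have -> : \sum_(i < n) h (lift ord0 i) * PS_derive u (n - lift ord0 i)
    = \sum_(i < n.+1) h i.+1 * (n - i)%:R * u (n - i)%N.
  rewrite [RHS]big_ord_recr subnn /= mulr0 mul0r addr0; apply: eq_bigr => i _.
  by rewrite /bump leq0n add1n PS_deriveE subnSK // mulrA.
have -> : \sum_(i < n.+1) h i.+1 * (i.+1%:R * s - (n - i)%:R) * u (n - i)%N
    = s * \sum_(i < n.+1) PS_derive h i * u (n - i)%N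
      - \sum_(i < n.+1) h i.+1 * (n - i)%:R * u (n - i)%N.
  by rewrite mulr_sumr -sumrB; apply: eq_bigr => i _; rewrite PS_deriveE; ring.
ring.
Qed.

Definition miller_step n (l : seq {poly R}) : {poly R} :=
  n.+1%:R^-1 *: \sum_(i < n.+1) h i.+1 *: ((i.+1%:R *: 'X - (n - i)%:R%:P) * l`_i).

(* [miller_polys n] lists the Miller polynomials newest first, so that its i-th item is
   [miller_poly (n - i)]. *)
Fixpoint miller_polys n : seq {poly R} :=
  if n is n'.+1 then miller_step n' (miller_polys n') :: miller_polys n' else [:: 1].

Definition miller_poly n := head 0 (miller_polys n).

Lemma nth_miller_polys n i : (i <= n)%N -> (miller_polys n)`_i = miller_poly (n - i).
Proof. by elim: n i => [|n IH] [|i] //= le_in; rewrite IH. Qed.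

Lemma miller_polyS n : miller_poly n.+1 = n.+1%:R^-1 *:
  \sum_(i < n.+1) h i.+1 *: ((i.+1%:R *: 'X - (n - i)%:R%:P) * miller_poly (n - i)).
Proof.
rewrite /miller_poly /= /miller_step; congr (_ *: _); apply: eq_bigr => i _.
by rewrite nth_miller_polys // -ltnS.
Qed.

Lemma size_miller_poly n : (size (miller_poly n) <= n.+1)%N.
Proof.
elim/ltn_ind: n => [[|n]] IH; first by rewrite size_poly1.
rewrite miller_polyS; apply: leq_trans (size_scale_leq _ _) _.
apply: leq_trans (size_sum _ _ _) _; apply/bigmax_leqP => i _.
apply: leq_trans (size_scale_leq _ _) _; apply: leq_trans (size_polyMleq _ _) _.
have size_lin : leq (size (i.+1%:R *: 'X - (n - i)%:R%:P : {poly R})) 2.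
  rewrite (leq_trans (size_polyD _ _)) // geq_max size_polyN size_polyC.
  by rewrite (leq_trans (leq_b1 _)) // andbT (leq_trans (size_scale_leq _ _)) ?size_polyX.
have size_Q : (size (miller_poly (n - i)) <= (n - i).+1)%N by rewrite IH // ltnS leq_subr.
have := leq_add size_lin size_Q; rewrite add2n => le_sum.
by rewrite -subn1 leq_subLR add1n (leq_trans le_sum) // !ltnS leq_subr.
Qed.

(* The n-th coefficient of h^s. *)
Definition rpow_coef (s : R) (n : nat) : R := (miller_poly n).[s].

Lemma rpow_coef_0 s : rpow_coef s 0 = 1.
Proof. exact: hornerC. Qed.

Lemma rpow_coef_miller s : miller_rec h s (rpow_coef s).
Proof.
move=> n; rewrite /rpow_coef miller_polyS hornerZ horner_sum INRE RmultE.
rewrite mulrA mulfV ?pnatr_eq0 // mul1r miller_sumE; apply: eq_bigr => i _.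
by rewrite hornerZ hornerM hornerD hornerN hornerZ hornerX hornerC mulrA.
Qed.

Lemma miller_rec_unique s u v :
  miller_rec h s u -> miller_rec h s v -> u 0%N = v 0%N -> forall n, u n = v n.
Proof.
move=> rec_u rec_v eq0 n; elim/ltn_ind: n => [[|n]] IH //.
apply: (@mulfI _ (INR n.+1)); first by rewrite INRE pnatr_eq0.
move: (rec_u n) (rec_v n); rewrite !RmultE => -> ->; rewrite !miller_sumE.
by apply: eq_bigr => i _; rewrite IH // ltnS leq_subr.
Qed.

Lemma rpow_coef_nat k n : rpow_coef (INR k) n = pow_coef h k n.
Proof.
apply: (@miller_rec_unique (INR k) (rpow_coef (INR k)) (pow_coef h k)).
- exact: rpow_coef_miller.
- exact/power_ode_miller/pow_coef_ode.
- by rewrite rpow_coef_0 pow_coef_0.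
Qed.

End PowerCoefficients.

Lemma gbinomE x k : gbinom x k = (falling_poly k).[x] / k`!%:R.
Proof.
rewrite /gbinom prodRE horner_falling_poly RdivE INRE factE; congr (_ / _).
by apply: eq_bigr => j _; rewrite RminusE INRE.
Qed.

(* Stated with the standard notations (and [Nat.sub] rather than ssrnat's [subn]) so that
   it can be used for rewriting outside the module. *)
Section BinomialFormula.
Local Open Scope R_scope.

Lemma rpow_coef_binomial h s n : h 0%N = 1 ->
  rpow_coef h s n = sumR (S n) (fun k => gbinom s k * gbinom (INR n - s) (Nat.sub n k) * pow_coef h k n).
Proof.
move=> h0; rewrite /rpow_coef {1}(binomial_interpolation (size_miller_poly h n)).
rewrite horner_sum sumRE; apply: eq_bigr => k _.
have := rpow_coef_nat _ h0 k n; rewrite /rpow_coef INRE => ->.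
rewrite hornerZ /binom_basis hornerZ hornerM horner_comp hornerD hornerN hornerC hornerX !gbinomE.
by rewrite INRE RminusE !RmultE natrM invfM; ring.
Qed.

End BinomialFormula.

End MillerRecurrence.

Import MillerRecurrence.
Set Bullet Behavior "Strict Subproofs".

Lemma sumR_ext n f g : (forall i, (i < n)%nat -> f i = g i) -> sumR n f = sumR n g.
Proof.
induction n as [|n IH]; intros H; simpl; [reflexivity|].
rewrite IH, H; [reflexivity | lia | intros; apply H; lia].
Qed.

Lemma sumR_scal n c f : sumR n (fun i => c * f i) = c * sumR n f.
Proof. induction n as [|n IH]; simpl; [ring | rewrite IH; ring]. Qed.

Lemma sumR_le n f g : (forall i, (i < n)%nat -> f i <= g i) -> sumR n f <= sumR n g.
Proof.
induction n as [|n IH]; intros H; simpl; [lra|].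
apply Rplus_le_compat; [apply IH; intros; apply H; lia | apply H; lia].
Qed.

Lemma Rabs_sumR n f : Rabs (sumR n f) <= sumR n (fun i => Rabs (f i)).
Proof.
induction n as [|n IH]; simpl; [rewrite Rabs_R0; lra|].
eapply Rle_trans; [apply Rabs_triang | lra].
Qed.

Lemma sumR_seq n f : fold_right Rplus 0 (map f (seq 0 n)) = sumR n f.
Proof.
induction n as [|n IH]; [reflexivity|].
rewrite seq_S, map_app, fold_right_app; simpl.
rewrite <- IH; generalize (map f (seq 0 n)); intros l.
induction l as [|a l IHl]; simpl; [ring | rewrite IHl; ring].
Qed.

Lemma sumR_zero_tail n p f : (forall i, (n <= i)%nat -> f i = 0) -> sumR (n + p) f = sumR n f.
Proof.
intros H; induction p as [|p IH]; [rewrite Nat.add_0_r; reflexivity|].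
rewrite Nat.add_succ_r; simpl; rewrite IH, H; [ring | lia].
Qed.

Lemma sum_f_R0_sumR f n : sum_f_R0 f n = sumR (S n) f.
Proof. induction n as [|n IH]; simpl; [ring | rewrite IH; reflexivity]. Qed.

Lemma sumR_shift n f : sumR (S n) f = f 0%nat + sumR n (fun i => f (S i)).
Proof. induction n as [|n IH]; [simpl; ring | simpl sumR in *; rewrite IH; ring]. Qed.

Lemma geometric_sum_le M n : 2 <= M -> sumR (S n) (fun i => M ^ (n - i)) <= 2 * M ^ n.
Proof.
intros HM; induction n as [|n IH]; [simpl; lra|].
rewrite sumR_shift; simpl pow at 1 3.
change (fun i => M ^ (S n - S i)) with (fun i => M ^ (n - i)).
pose proof (pow_le M n ltac:(lra)); nra.
Qed.

Lemma miller_weight_bound h s n i : INR (S i) * Rabs (h (S i)) <= 1 -> (i <= n)%nat ->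
  Rabs (h (S i) * (INR (S i) * s - INR (n - i))) <= Rabs s + INR n.
Proof.
intros hb Hin; rewrite Rabs_mult.
assert (Hi1 : 1 <= INR (S i)) by (rewrite S_INR; pose proof (pos_INR i); lra).
assert (Hni : INR (n - i) <= INR n) by (apply le_INR; lia).
assert (Hlin : Rabs (INR (S i) * s - INR (n - i)) <= INR (S i) * Rabs s + INR (n - i)).
{ unfold Rminus; eapply Rle_trans; [apply Rabs_triang|].
  rewrite Rabs_Ropp, Rabs_mult, (Rabs_pos_eq (INR (S i))), (Rabs_pos_eq (INR (n - i)));
    [lra | apply pos_INR | apply pos_INR]. }
pose proof (Rabs_pos (h (S i))); pose proof (Rabs_pos s); pose proof (pos_INR (n - i)).
assert (Hh1 : Rabs (h (S i)) <= 1) by nra.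
nra.
Qed.

Lemma rpow_coef_bound h s : (forall j, INR (S j) * Rabs (h (S j)) <= 1) ->
  forall n, Rabs (rpow_coef h s n) <= (2 * Rabs s + 2) ^ n.
Proof.
intros hb; set (M := 2 * Rabs s + 2); assert (Hs := Rabs_pos s).
intros n; induction n as [n IH] using (well_founded_induction Wf_nat.lt_wf).
destruct n as [|n]; [rewrite (rpow_coef_0 h s : _ = 1), Rabs_R1; simpl; lra|].
assert (HMn : 0 <= M ^ n) by (apply pow_le; unfold M; lra).
assert (Hsum : Rabs (miller_sum h s (rpow_coef h s) n) <= (Rabs s + INR n) * (2 * M ^ n)).
{ unfold miller_sum; eapply Rle_trans; [apply Rabs_sumR|].
  apply Rle_trans with (sumR (S n) (fun i => (Rabs s + INR n) * M ^ (n - i))).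
  - apply sumR_le; intros i Hi; rewrite Rabs_mult.
    apply Rmult_le_compat; try apply Rabs_pos.
    + apply miller_weight_bound; [apply hb | lia].
    + apply IH; lia.
  - rewrite sumR_scal; apply Rmult_le_compat_l; [pose proof (pos_INR n); lra|].
    apply geometric_sum_le; unfold M; lra. }
assert (Hu : INR (S n) * Rabs (rpow_coef h s (S n)) = Rabs (miller_sum h s (rpow_coef h s) n)).
{ rewrite <- (rpow_coef_miller h s n), Rabs_mult, (Rabs_pos_eq (INR (S n))) by apply pos_INR.
  reflexivity. }
apply (Rmult_le_reg_l (INR (S n))); [apply lt_0_INR; lia|].
rewrite Hu; eapply Rle_trans; [exact Hsum|].
assert (Hgap : 0 <= (INR (S n) * M - 2 * (Rabs s + INR n)) * M ^ n).
{ apply Rmult_le_pos; [|exact HMn]; rewrite S_INR; unfold M; pose proof (pos_INR n); nra. }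
simpl pow; lra.
Qed.

(** * Sums over tuples *)

Lemma fold_Rplus_app l1 l2 :
  fold_right Rplus 0 (l1 ++ l2) = fold_right Rplus 0 l1 + fold_right Rplus 0 l2.
Proof. induction l1 as [|a l IH]; simpl; [ring | rewrite IH; ring]. Qed.

Lemma fold_Rplus_scal {A : Type} c (f : A -> R) l :
  fold_right Rplus 0 (map (fun x => c * f x) l) = c * fold_right Rplus 0 (map f l).
Proof. induction l as [|a l IH]; simpl; [ring | rewrite IH; ring]. Qed.

Lemma fold_Rplus_flat_map {A B : Type} (f : B -> R) (p : B -> bool) (g : A -> list B) l :
  fold_right Rplus 0 (map f (filter p (flat_map g l)))
  = fold_right Rplus 0 (map (fun a => fold_right Rplus 0 (map f (filter p (g a)))) l).
Proof.
induction l as [|a l IH]; simpl; [reflexivity|].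
rewrite filter_app, map_app, fold_Rplus_app, IH; reflexivity.
Qed.

Lemma filter_map_cons j (p : list nat -> bool) T :
  filter p (map (cons j) T) = map (cons j) (filter (fun js => p (j :: js)) T).
Proof. induction T as [|x T IH]; simpl; [|destruct (p (j :: x)); simpl; rewrite IH]; reflexivity. Qed.

Definition tuple_weight (w : nat -> R) (js : list nat) : R := fold_right Rmult 1 (map w js).

Definition sum_tuples (w : nat -> R) k N r : R :=
  fold_right Rplus 0
    (map (tuple_weight w) (filter (fun js => Nat.eqb (list_sumn js) r) (tuples k N))).

Lemma sum_tuples_cons w k N r j :
  fold_right Rplus 0 (map (tuple_weight w)
    (filter (fun js => Nat.eqb (list_sumn js) r) (map (cons j) (tuples k N))))
  = if Nat.leb j r then w j * sum_tuples w k N (r - j) else 0.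
Proof.
rewrite filter_map_cons, map_map; destruct (Nat.leb j r) eqn:Hjr.
- apply Nat.leb_le in Hjr; unfold sum_tuples; rewrite <- fold_Rplus_scal.
  f_equal; rewrite (filter_ext _ (fun js => Nat.eqb (list_sumn js) (r - j))); [reflexivity|].
  intros js; simpl; apply Bool.eq_true_iff_eq; rewrite !Nat.eqb_eq; lia.
- apply Nat.leb_gt in Hjr; rewrite (filter_ext _ (fun _ => false)), filter_false; [reflexivity|].
  intros js; simpl; apply Nat.eqb_neq; lia.
Qed.

Lemma sum_tuples_pow_coef w k N r : (r <= N)%nat -> sum_tuples w k N r = pow_coef w k r.
Proof.
revert r; induction k as [|k IH]; intros r Hr; unfold sum_tuples; [destruct r; cbn; ring|].
simpl tuples; rewrite fold_Rplus_flat_map, sumR_seq.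
replace (N + 1)%nat with (S r + (N - r))%nat by lia.
rewrite sumR_zero_tail.
- apply sumR_ext; intros j Hj; rewrite sum_tuples_cons.
  replace (Nat.leb j r) with true by (symmetry; apply Nat.leb_le; lia).
  rewrite IH by lia; reflexivity.
- intros j Hj; rewrite sum_tuples_cons.
  replace (Nat.leb j r) with false by (symmetry; apply Nat.leb_gt; lia); reflexivity.
Qed.

Lemma pow_coef_scale c w k n : pow_coef (fun j => c * w j) k n = c ^ k * pow_coef w k n.
Proof.
revert n; induction k as [|k IH]; intros n; [simpl; ring|].
cbn [pow_coef pow]; rewrite <- sumR_scal; apply sumR_ext; intros j _; rewrite IH; ring.
Qed.

Lemma Rinv_tuple_weight f js : (forall j, f j <> 0) ->
  / fold_right Rmult 1 (map f js) = tuple_weight (fun j => / f j) js.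
Proof.
intros Hf; induction js as [|j js IH]; simpl; [apply Rinv_1|].
rewrite Rinv_mult, IH; reflexivity.
Qed.

Lemma Ccoef_pow_coef m n k : Ccoef m n k = INR (fact n) * pow_coef (hcoef m) k n.
Proof.
unfold Ccoef; rewrite (map_ext _ (tuple_weight (fun j => / INR (fact (m + j))))).
- fold (sum_tuples (fun j => / INR (fact (m + j))) k n n); rewrite sum_tuples_pow_coef by lia.
  change (hcoef m) with (fun j => INR (fact m) * / INR (fact (m + j))).
  rewrite pow_coef_scale; ring.
- intros js; apply Rinv_tuple_weight; intros j; apply INR_fact_neq_0.
Qed.

(** * Analysis *)

Lemma Rbar_le_CV_radius a r M : (forall n, Rabs (a n * r ^ n) <= M) -> Rbar_le r (CV_radius a).
Proof. intros H; apply (proj1 (CV_radius_bounded a)); exists M; exact H. Qed.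

Lemma CV_radius_of_pow_bound a M : 0 < M -> (forall n, Rabs (a n) <= M ^ n) ->
  Rbar_le (/ M) (CV_radius a).
Proof.
intros HM Ha; apply (Rbar_le_CV_radius _ _ 1); intros n.
rewrite Rabs_mult, <- RPow_abs, (Rabs_pos_eq (/ M)), pow_inv by (left; apply Rinv_0_lt_compat, HM).
assert (HMn : 0 < M ^ n) by (apply pow_lt, HM).
apply (Rmult_le_reg_r (M ^ n)); [exact HMn|].
rewrite Rmult_assoc, Rinv_l, Rmult_1_r, Rmult_1_l by lra; apply Ha.
Qed.

Lemma CV_radius_gt0_of_series a x l :
  0 < x -> is_series (fun n => a n * x ^ n) l -> Rbar_lt 0 (CV_radius a).
Proof.
intros Hx Hl; apply Rbar_lt_le_trans with x; [exact Hx|].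
destruct (filterlim_bounded (fun n => a n * x ^ n)) as [M HM].
- exists 0; apply ex_series_lim_0; exists l; exact Hl.
- exact (Rbar_le_CV_radius a x M HM).
Qed.

Lemma CV_radius_gt0_near a : Rbar_lt 0 (CV_radius a) ->
  exists r, 0 < r /\ forall x, Rabs x < r -> Rbar_lt (Rabs x) (CV_radius a).
Proof.
intros Ha; assert (Hr : exists r, 0 < r /\ Rbar_le r (CV_radius a)).
{ destruct (CV_radius a) as [rho | |]; simpl in *; [| |contradiction].
  - exists rho; split; [exact Ha | apply Rle_refl].
  - exists 1; split; [lra | exact I]. }
destruct Hr as [r [Hr Hle]]; exists r; split; [exact Hr|].
intros x Hx; apply Rbar_lt_le_trans with r; [exact Hx | exact Hle].
Qed.

Lemma PSeries_pos_near0 h : h 0%nat = 1 -> Rbar_lt 0 (CV_radius h) ->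
  exists r, 0 < r /\ forall x, Rabs x < r -> 0 < PSeries h x.
Proof.
intros h0 Rh.
assert (Hcont : continuity_pt (PSeries h) 0) by (apply PSeries_continuity; rewrite Rabs_R0; exact Rh).
assert (half : 0 < / 2) by lra.
destruct (proj1 (continuity_pt_locally _ 0) Hcont (mkposreal _ half)) as [d Hd].
exists d; split; [apply cond_pos|]; intros x Hx.
assert (Hxd : Rabs (PSeries h x - PSeries h 0) < / 2).
{ apply Hd; change (Rabs (x - 0) < d); rewrite Rminus_0_r; exact Hx. }
rewrite PSeries_0, h0 in Hxd; apply Rabs_def2 in Hxd; lra.
Qed.

Lemma is_derive_zero_const f r x :
  (forall y, Rabs y < r -> is_derive f y 0) -> Rabs x < r -> f x = f 0.
Proof.
intros Hf Hx.
assert (Hbetween : forall y, Rmin 0 x <= y <= Rmax 0 x -> Rabs y < r).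
{ intros y Hy; apply Rle_lt_trans with (Rabs x); [|exact Hx].
  unfold Rmin, Rmax in Hy; destruct (Rle_dec 0 x); apply Rabs_le;
    [rewrite Rabs_pos_eq by lra | rewrite Rabs_left by lra]; lra. }
destruct (MVT_gen f 0 x (fun _ => 0)) as [c [_ Hc]].
- intros y Hy; apply Hf, Hbetween; lra.
- intros y Hy; apply derivable_continuous_pt; exists 0.
  apply is_derive_Reals, Hf, Hbetween, Hy.
- lra.
Qed.

Lemma PSeries_mult_power_ode h u s y : power_ode h s u ->
  Rbar_lt (Rabs y) (CV_radius h) -> Rbar_lt (Rabs y) (CV_radius u) ->
  PSeries h y * PSeries (PS_derive u) y = s * (PSeries (PS_derive h) y * PSeries u y).
Proof.
intros ode Hy_h Hy_u.
rewrite <- PSeries_mult; [| exact Hy_h | rewrite CV_radius_derive; exact Hy_u].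
rewrite <- PSeries_mult; [| rewrite CV_radius_derive; exact Hy_h | exact Hy_u].
rewrite <- PSeries_scal; apply PSeries_ext; exact ode.
Qed.

Lemma derivable_pt_lim_power_quotient U H dU dH s y :
  0 < H y -> derivable_pt_lim U y dU -> derivable_pt_lim H y dH -> H y * dU = s * (dH * U y) ->
  derivable_pt_lim (fun z => U z * exp (- s * ln (H z))) y 0.
Proof.
intros Hpos DU DH ode; set (E := exp (- s * ln (H y))).
assert (DE : derivable_pt_lim (fun z => exp (- s * ln (H z))) y (E * (- s * (/ H y * dH)))).
{ apply (derivable_pt_lim_comp (fun z => - s * ln (H z)) exp); [|apply derivable_pt_lim_exp].
  apply derivable_pt_lim_scal, (derivable_pt_lim_comp H ln); [exact DH|].
  apply derivable_pt_lim_ln; exact Hpos. }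
replace 0 with (dU * E + U y * (E * (- s * (/ H y * dH)))).
- exact (derivable_pt_lim_mult _ _ y _ _ DU DE).
- replace (dU * E + U y * (E * (- s * (/ H y * dH)))) with (E / H y * (H y * dU - s * (dH * U y)))
    by (field; lra).
  rewrite ode; ring.
Qed.

Lemma PSeries_power_ode h u s :
  h 0%nat = 1 -> u 0%nat = 1 -> Rbar_lt 0 (CV_radius h) -> Rbar_lt 0 (CV_radius u) ->
  power_ode h s u ->
  exists r, 0 < r /\ forall x, Rabs x < r -> 0 < PSeries h x /\ PSeries u x = Rpower (PSeries h x) s.
Proof.
intros h0 u0 Rh Ru ode.
destruct (CV_radius_gt0_near h Rh) as [rh [Hrh in_h]].
destruct (CV_radius_gt0_near u Ru) as [ru [Hru in_u]].
destruct (PSeries_pos_near0 h h0 Rh) as [rp [Hrp Hpos]].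
set (r := Rmin rh (Rmin ru rp)).
assert (Hr : 0 < r) by (unfold r; repeat apply Rmin_pos; assumption).
assert (Hsmall : forall x, Rabs x < r -> Rabs x < rh /\ Rabs x < ru /\ Rabs x < rp).
{ intros x Hx; unfold r in Hx; repeat split; eapply Rlt_le_trans; try exact Hx;
    [apply Rmin_l | eapply Rle_trans; [apply Rmin_r | apply Rmin_l]
    | eapply Rle_trans; apply Rmin_r]. }
set (W := fun y => PSeries u y * exp (- s * ln (PSeries h y))).
assert (HW : forall y, Rabs y < r -> is_derive W y 0).
{ intros y Hy; destruct (Hsmall y Hy) as [Hyh [Hyu Hyp]]; apply is_derive_Reals.
  apply derivable_pt_lim_power_quotient
    with (dU := PSeries (PS_derive u) y) (dH := PSeries (PS_derive h) y).
  - exact (Hpos y Hyp).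
  - apply is_derive_Reals, is_derive_PSeries, in_u, Hyu.
  - apply is_derive_Reals, is_derive_PSeries, in_h, Hyh.
  - apply PSeries_mult_power_ode; [exact ode | apply in_h, Hyh | apply in_u, Hyu]. }
exists r; split; [exact Hr|]; intros x Hx; split; [apply Hpos, Hsmall, Hx|].
assert (Wx := is_derive_zero_const W r x HW Hx).
unfold W in Wx; rewrite !PSeries_0, h0, u0, ln_1, Rmult_0_r, exp_0, Rmult_1_r in Wx.
unfold Rpower; apply (Rmult_eq_reg_r (exp (- s * ln (PSeries h x)))).
- rewrite Wx, <- exp_plus; replace (s * ln (PSeries h x) + - s * ln (PSeries h x)) with 0 by ring.
  symmetry; apply exp_0.
- apply Rgt_not_eq, exp_pos.
Qed.

Lemma hcoef_0 m : hcoef m 0 = 1.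
Proof. unfold hcoef; rewrite Nat.add_0_r; field; apply INR_fact_neq_0. Qed.

Lemma hcoef_bound m j : INR (S j) * Rabs (hcoef m (S j)) <= 1.
Proof.
assert (Hle : (S j * fact m <= fact (m + S j))%nat).
{ rewrite Nat.add_succ_r; apply Nat.mul_le_mono; [lia | apply fact_le; lia]. }
apply le_INR in Hle; rewrite mult_INR in Hle.
assert (Hpos := INR_fact_lt_0 (m + S j)).
unfold hcoef; rewrite Rabs_pos_eq by (apply Rle_mult_inv_pos; [apply pos_INR | exact Hpos]).
apply (Rmult_le_reg_r (INR (fact (m + S j)))); [exact Hpos|].
field_simplify; lra.
Qed.

Lemma CV_radius_hcoef m : Rbar_le 1 (CV_radius (hcoef m)).
Proof.
apply (Rbar_le_CV_radius _ _ 1); intros [|j]; rewrite pow1, Rmult_1_r.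
- rewrite hcoef_0, Rabs_R1; lra.
- assert (B := hcoef_bound m j); assert (Hj := pos_INR j); rewrite S_INR in B.
  pose proof (Rabs_pos (hcoef m (S j))); nra.
Qed.

Lemma exp_minus_taylor m x : Rabs x < 1 ->
  exp x - sumR m (fun k => x ^ k / INR (fact k)) = x ^ m / INR (fact m) * PSeries (hcoef m) x.
Proof.
intros Hx; set (e := fun k => x ^ k / INR (fact k)).
assert (Se : is_series e (exp x)).
{ eapply is_series_ext; [|exact (is_exp_Reals x)].
  intros k; unfold e; rewrite <- pow_n_pow; reflexivity. }
assert (Stail : is_series (fun k => e (m + k)%nat) (exp x - sumR m e)).
{ destruct m as [|m]; [rewrite Rminus_0_r; exact Se|].
  apply (is_series_incr_n e (S m)); [lia|].
  match goal with |- is_series _ ?l => replace l with (exp x); [exact Se|] end.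
  simpl pred; rewrite sum_n_Reals, sum_f_R0_sumR; cbn; ring. }
assert (Sh : is_series (fun k => x ^ m / INR (fact m) * (hcoef m k * x ^ k))
                       (x ^ m / INR (fact m) * PSeries (hcoef m) x)).
{ assert (Hin : Rbar_lt (Rabs x) (CV_radius (hcoef m)))
    by (apply Rbar_lt_le_trans with 1; [exact Hx | apply CV_radius_hcoef]).
  pose proof (PSeries_correct _ _ (CV_radius_inside _ _ Hin)) as Hp.
  apply (is_series_scal_l (x ^ m / INR (fact m))) in Hp.
  eapply is_series_ext; [|exact Hp]; intros k.
  rewrite <- (pow_n_pow x k).
  change (x ^ m / INR (fact m) * (pow_n x k * hcoef m k)
          = x ^ m / INR (fact m) * (hcoef m k * pow_n x k)).
  ring. }
rewrite <- (is_series_unique _ _ Stail), <- (is_series_unique _ _ Sh).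
apply Series_ext; intros k; unfold e, hcoef; rewrite pow_add.
field; split; apply INR_fact_neq_0.
Qed.

Lemma Gbase_PSeries m x : Rabs x < 1 -> 0 < PSeries (hcoef m) x ->
  Gbase m x = / PSeries (hcoef m) x.
Proof.
intros Hx Hpos; unfold Gbase; destruct (Req_EM_T x 0) as [->|Hx0].
- rewrite PSeries_0, hcoef_0, Rinv_1; reflexivity.
- rewrite exp_minus_taylor by exact Hx; field.
  repeat split; [lra | apply INR_fact_neq_0 | apply pow_nonzero; exact Hx0].
Qed.

Lemma CV_radius_rpow_hcoef m s : Rbar_lt 0 (CV_radius (rpow_coef (hcoef m) s)).
Proof.
assert (Hs := Rabs_pos s).
apply Rbar_lt_le_trans with (/ (2 * Rabs s + 2)); [simpl; apply Rinv_0_lt_compat; lra|].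
apply CV_radius_of_pow_bound; [lra | apply rpow_coef_bound, hcoef_bound].
Qed.

Lemma PSeries_rpow_hcoef m t : exists r, 0 < r /\ forall x, Rabs x < r ->
  PSeries (rpow_coef (hcoef m) (- t)) x = Rpower (Gbase m x) t.
Proof.
assert (h0 := hcoef_0 m).
assert (Rh : Rbar_lt 0 (CV_radius (hcoef m))).
{ apply Rbar_lt_le_trans with 1; [simpl; lra | apply CV_radius_hcoef]. }
destruct (PSeries_power_ode (hcoef m) _ (- t) h0 (rpow_coef_0 _ _) Rh (CV_radius_rpow_hcoef m _)
            (proj2 (power_ode_miller _ h0 _ _) (rpow_coef_miller _ _))) as [r [Hr Hpow]].
exists (Rmin r 1); split; [apply Rmin_pos; lra|]; intros x Hx.
assert (Hxr : Rabs x < r) by (eapply Rlt_le_trans; [exact Hx | apply Rmin_l]).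
assert (Hx1 : Rabs x < 1) by (eapply Rlt_le_trans; [exact Hx | apply Rmin_r]).
destruct (Hpow x Hxr) as [Hp ->].
rewrite Gbase_PSeries by assumption.
unfold Rpower; rewrite ln_Rinv by exact Hp; f_equal; ring.
Qed.

Lemma egf_near0_coef b F a :
  egf_near0 b F -> Rbar_lt 0 (CV_radius a) ->
  (exists r, 0 < r /\ forall x, Rabs x < r -> PSeries a x = F x) ->
  forall n, b n = INR (fact n) * a n.
Proof.
intros [d [Hd Hb]] Ra [r [Hr Ha]] n.
set (c := fun k => b k / INR (fact k)).
assert (Sc : forall x, Rabs x < d -> is_series (fun k => c k * x ^ k) (F x)).
{ intros x Hx; apply (is_series_ext (fun k => b k * x ^ k / INR (fact k))).
  - intros k; unfold c, Rdiv; rewrite !Rmult_assoc, (Rmult_comm (x ^ k)); reflexivity.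
  - apply is_series_Reals, Hb, Hx. }
assert (Rc : Rbar_lt 0 (CV_radius c)).
{ apply (CV_radius_gt0_of_series c (d / 2) (F (d / 2))); [lra|].
  apply Sc; rewrite Rabs_pos_eq; lra. }
assert (Hcn : c n = a n).
{ apply PSeries_ext_recip; [exact Rc | exact Ra|].
  exists (mkposreal _ (Rmin_pos _ _ Hd Hr)); intros y Hy.
  change (Rabs (y - 0) < Rmin d r) in Hy; rewrite Rminus_0_r in Hy.
  rewrite Ha by (eapply Rlt_le_trans; [exact Hy | apply Rmin_r]).
  apply is_pseries_unique, is_pseries_Reals, is_series_Reals, Sc.
  eapply Rlt_le_trans; [exact Hy | apply Rmin_l]. }
unfold c in Hcn; rewrite <- Hcn; field; apply INR_fact_neq_0.
Qed.

Theorem corollary4p1 (t : R) (m : nat) (B : nat -> R -> R)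
  (HB : forall x : R,
      egf_near0 (fun n => B n x) (fun z => Rpower (Gbase m z) t * exp (x * z))) :
  forall n : nat,
    B n 0 = sumR (S n) (fun k => gbinom (- t) k * gbinom (INR n + t) (n - k) * Ccoef m n k).
Proof.
intros n.
assert (Hcoef : forall k, B k 0 = INR (fact k) * rpow_coef (hcoef m) (- t) k).
{ apply (egf_near0_coef _ _ _ (HB 0) (CV_radius_rpow_hcoef m (- t))).
  destruct (PSeries_rpow_hcoef m t) as [r [Hr Hpow]].
  exists r; split; [exact Hr|]; intros x Hx.
  rewrite Hpow, Rmult_0_l, exp_0, Rmult_1_r by exact Hx; reflexivity. }
rewrite Hcoef, rpow_coef_binomial by apply hcoef_0.
rewrite <- sumR_scal; apply sumR_ext; intros k _.
rewrite Ccoef_pow_coef; replace (INR n - - t) with (INR n + t) by ring; ring.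
Qed.
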